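(* For every integer $n\ge 3$, the graph $R_n$ is a rooted directed path graph.
   Context: For $n\ge 3$, $R_n$ is the graph with vertex set $\bigcup_{i=1}^n\{a_i,b_i,c_i,d_i\}$ (all distinct, $4n$ vertices), in which two distinct vertices are adjacent iff they both belong to one of the sets $C_i=\{a_i,b_i,c_i,d_i\}$ ($1\le i\le n$) or $C'_i=\{a_j \mid i\le j\le n\}\cup\{b_i,b_{i+1},c_i\}$ ($1\le i\le n-1$); these sets are exactly the maximal cliques of $R_n$. A graph is a rooted directed path graph if it is the intersection graph of a family of directed paths in an arborescence (a rooted tree with all edges directed away from the root), i.e. vertices correspond to directed paths and two distinct vertices are adjacent iff their paths share a node. *)

From mathcomp Require Import all_boot.
Set Implicit Arguments. Unset Strict Implicit. Unset Printing Implicit Defensive.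

(** The arcs of the arborescence are [par v -> v] for [v <> r]
    (all directed away from the root). *)
Definition is_arborescence (N : finType) (par : N -> N) (r : N) : Prop :=
  par r = r /\ forall v : N, exists k : nat, iter k par v = r.

(** The directed path ending at node [b] and going [k] steps up towards the
    root (truncated at the root): its node set is
    {b, par b, ..., iter k par b}.  Every directed path of the arborescence
    (with at least one node) is of this form. *)
Definition on_dpath (N : finType) (par : N -> N) (b : N) (k : nat) (u : N) : Prop :=
  exists i : nat, i <= k /\ iter i par b = u.

Definition rooted_directed_path_graph (V : Type) (adj : V -> V -> Prop) : Prop :=
  exists (N : finType) (par : N -> N) (r : N),
    is_arborescence par r /\
    exists (bot : V -> N) (len : V -> nat),
      forall x y : V, x <> y ->
        (adj x y <-> exists u : N, on_dpath par (bot x) (len x) u /\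
                                   on_dpath par (bot y) (len y) u).

(** * The graph R_n.
    Vertices are pairs (i, l) with i : 'I_n (0-indexed, i.e. index i+1 of the
    paper) and l : 'I_4 encoding the letter (0 = a, 1 = b, 2 = c, 3 = d). *)
Definition Rvert (n : nat) := ('I_n * 'I_4)%type.

Definition inC (n : nat) (i : nat) (x : Rvert n) : Prop := nat_of_ord x.1 = i.

(** membership in C'_i, for 0-indexed i with i+1 < n (paper: 1 <= i+1 <= n-1):
    C'_i = {a_j | i <= j} ∪ {b_i, b_{i+1}, c_i} *)
Definition inC' (n : nat) (i : nat) (x : Rvert n) : Prop :=
  i.+1 < n /\
  [\/ (nat_of_ord x.2 = 0 /\ i <= x.1),
      (nat_of_ord x.2 = 1 /\ (nat_of_ord x.1 = i \/ nat_of_ord x.1 = i.+1)) |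
      (nat_of_ord x.2 = 2 /\ nat_of_ord x.1 = i)].

Definition R_adj (n : nat) (x y : Rvert n) : Prop :=
  x <> y /\
  ((exists i : nat, i < n /\ inC i x /\ inC i y) \/
   (exists i : nat, inC' i x /\ inC' i y)).

From mathcomp Require Import all_boot.
From mathcomp Require Import zify.
Set Implicit Arguments. Unset Strict Implicit. Unset Printing Implicit Defensive.

(* The cliques of R_n form a caterpillar-shaped clique tree: a spine
   C'_1 - C'_2 - ... - C'_(n-1) rooted at C'_1, with each C_i hanging off
   C'_(min i (n-1)) as a leaf.  The cliques containing a vertex of index i are
   C_i together with an interval of the spine ending at C'_(min i (n-1)):
   C'_1, ..., C'_(min i (n-1)) for a_i, C'_(i-1), C'_i for b_i, C'_i for c_i
   (those that exist).
   Hence they form a directed path, and two vertices are adjacent iff they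
   share a clique, i.e. iff their paths meet. *)

Lemma clique_tree_rooted_directed_path_graph (V : Type) (adj : V -> V -> Prop)
    (N : finType) (par : N -> N) (r : N) (bot : V -> N) (len : V -> nat)
    (in_clique : N -> V -> Prop) :
  is_arborescence par r ->
  (forall x u, on_dpath par (bot x) (len x) u <-> in_clique u x) ->
  (forall x y, x <> y -> adj x y <-> exists u, in_clique u x /\ in_clique u y) ->
  rooted_directed_path_graph adj.
Proof.
move=> arbo pathE adjE; exists N, par, r; split=> //.
exists bot, len => x y /adjE ->.
by split=> -[u [xu yu]]; exists u; split; apply/pathE.
Qed.

Section Caterpillar.
Variable m : nat.

Definition caterpillar := ('I_m.+1 * bool)%type.

(* Spine node t_i is [(i, true)], the leaf [(i, false)] hangs off t_(minn i m.-1). *)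
Definition cat_par (v : caterpillar) : caterpillar :=
  if v.2 then (inord v.1.-1, true) else (inord (minn v.1 m.-1), true).

Lemma iter_cat_par_spine (k : nat) (i : 'I_m.+1) :
  iter k cat_par (i, true) = (inord (i - k), true).
Proof.
elim: k => [|k IH]; first by rewrite subn0 inord_val.
by rewrite iterS IH /cat_par /= inordK ?subnS //; have := ltn_ord i; lia.
Qed.

Lemma iter_cat_par_leaf (k : nat) (i : 'I_m.+1) :
  iter k.+1 cat_par (i, false) = (inord (minn i m.-1 - k), true).
Proof.
by rewrite iterSr /cat_par /= iter_cat_par_spine inordK //; have := ltn_ord i; lia.
Qed.

Lemma is_arborescence_caterpillar : is_arborescence cat_par (ord0, true).
Proof.
have inord0 : inord 0 = ord0 :> 'I_m.+1 by apply: val_inj; rewrite /= inordK.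
split=> [|[i [|]]]; first by rewrite /cat_par /= inord0.
- by exists i; rewrite iter_cat_par_spine subnn inord0.
- by exists (minn i m.-1).+1; rewrite iter_cat_par_leaf subnn inord0.
Qed.

Lemma on_dpath_leaf (i : 'I_m.+1) (k : nat) (u : caterpillar) :
  on_dpath cat_par (i, false) k u <->
  u = (i, false) \/ [/\ u.2, u.1 <= minn i m.-1 & minn i m.-1 < u.1 + k].
Proof.
have := ltn_ord i; split.
- case=> -[|s] [hs <-]; [by left | right].
  by rewrite iter_cat_par_leaf /= inordK; [split=> //; lia | lia].
- case=> [->|]; first by exists 0.
  case: u => j [] [] //= _ hj hjk; exists (minn i m.-1 - j).+1; split; first lia.
  by rewrite iter_cat_par_leaf; congr pair; apply: val_inj; rewrite /= inordK; lia.
Qed.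

End Caterpillar.

Section CliqueTreeOfR.
Variable m : nat.

Definition R_clique (u : caterpillar m) (x : Rvert m.+1) : Prop :=
  if u.2 then inC' u.1 x else inC u.1 x.

Lemma R_adj_share_clique (x y : Rvert m.+1) : x <> y ->
  R_adj x y <-> exists u, R_clique u x /\ R_clique u y.
Proof.
move=> neq_xy; rewrite /R_adj; split.
- case=> _ [[i [lt_in [xi yi]]] | [i [xi yi]]].
  + by exists (Ordinal lt_in, false).
  + have lt_im : i < m.+1 by case: xi; lia.
    by exists (Ordinal lt_im, true).
- by case=> -[i []] [xi yi]; split=> //; [right | left]; exists i.
Qed.

Definition R_bot (x : Rvert m.+1) : caterpillar m := (x.1, false).

(* Number of spine nodes on the path of [x] (0-indexed, C'_m does not exist):
   a_i reaches the root, b_i covers C'_i and C'_(i-1), c_i covers C'_i. *)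
Definition R_len (x : Rvert m.+1) : nat :=
  match val x.2 with
  | 0 => (minn x.1 m.-1).+1
  | 1 => if x.1 < m then 2 else 1
  | 2 => if x.1 < m then 1 else 0
  | _ => 0
  end.

Hypothesis m_gt0 : 0 < m.

Lemma spine_interval_inC' (j : 'I_m.+1) (x : Rvert m.+1) :
  j <= minn x.1 m.-1 < j + R_len x <-> inC' j x.
Proof.
case: x => i [[|[|[|[|l]]]] hl]; have := ltn_ord i; have := ltn_ord j;
  rewrite /R_len /inC' /= => lt_jm lt_im.
- by split=> [/andP[h1 h2] | [h [[_ h1]|[]|[]]]] //;
    [split; [lia | constructor 1; lia] | apply/andP; lia].
- by case: (ltnP i m) => lt_i; (split=> [/andP[h1 h2] | [h [[]|[_ h1]|[]]]] //;
    [split; [lia | constructor 2; lia] | apply/andP; lia]).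
- by case: (ltnP i m) => lt_i; (split=> [/andP[h1 h2] | [h [[]|[]|[_ h1]]]] //;
    [split; [lia | constructor 3; lia] | apply/andP; lia]).
- by split=> [/andP[h1 h2] | [h [[]|[]|[]]]] //; lia.
- by split=> [/andP[h1 h2] | [h [[]|[]|[]]]] //; lia.
Qed.

Lemma on_dpath_R (x : Rvert m.+1) (u : caterpillar m) :
  on_dpath (@cat_par m) (R_bot x) (R_len x) u <-> R_clique u x.
Proof.
rewrite on_dpath_leaf /R_clique; case: u => j [] /=.
- rewrite -spine_interval_inC'.
  by split=> [[//|[_ -> ->]] | /andP[h1 h2]]; last by right.
- by rewrite /inC; split=> [[[->] | []] | /val_inj ->] //; left.
Qed.

End CliqueTreeOfR.

Theorem mainTheorem2 (n : nat) (hn : 3 <= n) :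
  rooted_directed_path_graph (@R_adj n).
Proof.
case: n hn => [//|m] hn.
have m_gt0 : 0 < m by lia.
exact: clique_tree_rooted_directed_path_graph
  (is_arborescence_caterpillar m) (on_dpath_R m_gt0) (@R_adj_share_clique m).
Qed.
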